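(* Let $n=2$ and let $t\mapsto (q(t),p(t))$, $t\ge0$, be a solution of $\dot q_i=\partial H/\partial p_i$, $\dot p_i=-\partial H/\partial q_i$, $H=\frac12\sum_{i,j=1}^2p_ip_je^{-|q_i-q_j|}$, with $q_1(0)>q_2(0)$, normalized so that $H_1:=p_1^2+p_2^2+2p_1p_2e^{-|q_1-q_2|}=1$ (equivalently the corresponding geodesic of $g=(e^{-|q_i-q_j|})^{-1}$ has unit speed). If $|p_1+p_2|>1$, or if $p_1-p_2>0$ at $t=0$, then the trajectory never approaches the singular set $\{q_1=q_2\}$; consequently the corresponding 2-peakon solution $u=p_1e^{-|x-q_1|}+p_2e^{-|x-q_2|}$ of the Camassa-Holm equation has no collision.
   Context: The quantity $p_1+p_2$ is constant along solutions. *)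

From Stdlib Require Import Reals Lra.
Open Scope R_scope.

Definition sgn (x : R) : R :=
  if Rlt_dec 0 x then 1 else if Rlt_dec x 0 then -1 else 0.

Definition kern (q1 q2 : R) : R := exp (- Rabs (q1 - q2)).

(* H_1 = p1^2 + p2^2 + 2 p1 p2 e^{-|q1-q2|}  (= 2H) *)
Definition H1 (q1 q2 p1 p2 : R) : R :=
  p1 ^ 2 + p2 ^ 2 + 2 * p1 * p2 * kern q1 q2.

Definition right_cont0 (f : R -> R) : Prop :=
  forall eps, 0 < eps -> exists d, 0 < d /\
    forall t, 0 <= t < d -> Rabs (f t - f 0) < eps.

(* Solution for t >= 0 of Hamilton's equations for
   H = 1/2 sum_{i,j} p_i p_j e^{-|q_i-q_j|}, n = 2:
     q1' = dH/dp1 = p1 + p2 E,   q2' = dH/dp2 = p2 + p1 E,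
     p1' = -dH/dq1 = p1 p2 sgn(q1-q2) E,  p2' = -dH/dq2 = - p1 p2 sgn(q1-q2) E,
   with E = e^{-|q1-q2|}; the ODE holds for every t > 0 and the
   functions are right-continuous at t = 0. *)
Definition peakon2_solution (q1 q2 p1 p2 : R -> R) : Prop :=
  (forall t, 0 < t ->
     derivable_pt_lim q1 t (p1 t + p2 t * kern (q1 t) (q2 t)) /\
     derivable_pt_lim q2 t (p2 t + p1 t * kern (q1 t) (q2 t)) /\
     derivable_pt_lim p1 t
       (p1 t * p2 t * sgn (q1 t - q2 t) * kern (q1 t) (q2 t)) /\
     derivable_pt_lim p2 t
       (- (p1 t * p2 t * sgn (q1 t - q2 t) * kern (q1 t) (q2 t)))) /\
  right_cont0 q1 /\ right_cont0 q2 /\ right_cont0 p1 /\ right_cont0 p2.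

From Stdlib Require Import Reals Lra.
From Coquelicot Require Import Coquelicot.
Open Scope R_scope.

(* Write X = q1 - q2, K = e^{-|X|}, S = p1 + p2 and D = p1 - p2.  The equations
   give S' = 0 and X' = D (1 - K), and conservation of H1 reads
   S^2 (1 + K) + D^2 (1 - K) = 2.  If |S| > 1 this bounds K by 2/S^2 - 1 < 1,
   which keeps |X| away from 0.  If |S| <= 1 and D(0) > 0, then D never vanishes:
   for S^2 < 1 the identity forbids D = 0, and for S^2 = 1 it forces p1 p2 = 0
   whenever X <> 0, so that D' = 2 p1 p2 sgn(X) K = 0.  Hence X' >= 0 and X stays
   above X(0). *)

Lemma derivable_pt_lim_Rabs_comp f x l :
  derivable_pt_lim f x l -> (f x = 0 -> l = 0) ->
  derivable_pt_lim (fun y => Rabs (f y)) x (sgn (f x) * l).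
Proof.
  intros Hf Hl. unfold sgn.
  destruct (Rlt_dec 0 (f x)) as [Hpos|Hnpos].
  { exact (derivable_pt_lim_comp f Rabs x l 1 Hf (Rabs_derive_1 _ Hpos)). }
  destruct (Rlt_dec (f x) 0) as [Hneg|Hnneg].
  { exact (derivable_pt_lim_comp f Rabs x l (-1) Hf (Rabs_derive_2 _ Hneg)). }
  assert (Hzero : f x = 0) by lra.
  rewrite (Hl Hzero), Rmult_0_r.
  intros eps Heps. destruct (Hf eps Heps) as [d Hd]. exists d. intros h Hh Hhd.
  specialize (Hd h Hh Hhd). rewrite Hzero, (Hl Hzero), !Rminus_0_r in Hd.
  rewrite Hzero, Rabs_R0, !Rminus_0_r. unfold Rdiv in *.
  now rewrite Rabs_mult, Rabs_Rabsolu, <- Rabs_mult.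
Qed.

Lemma le_of_derive_nonneg F F' :
  continuity F -> (forall t, 0 < t -> derivable_pt_lim F t (F' t)) ->
  (forall t, 0 <= t -> 0 <= F' t) -> forall t, 0 <= t -> F 0 <= F t.
Proof.
  intros Hc Hd Hpos t Ht. destruct (Rle_lt_or_eq_dec 0 t Ht) as [Ht'|<-]; [|lra].
  destruct (MVT_gen F 0 t F') as [c [Hc1 Hc2]].
  - intros x Hx. rewrite Rmin_left, Rmax_right in Hx by lra.
    apply is_derive_Reals, Hd; lra.
  - intros x _. apply Hc.
  - rewrite Rmin_left, Rmax_right in Hc1 by lra.
    assert (0 <= F' c * (t - 0)) by (apply Rmult_le_pos; [apply Hpos|]; lra).
    lra.
Qed.

Lemma eq_of_derive_zero F :
  continuity F -> (forall t, 0 < t -> derivable_pt_lim F t 0) ->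
  forall t, 0 <= t -> F t = F 0.
Proof.
  intros Hc Hd t Ht.
  assert (Hup := le_of_derive_nonneg F (fun _ => 0) Hc Hd ltac:(intros; lra) t Ht).
  assert (Hdown := le_of_derive_nonneg (opp_fct F) (fun _ => 0) (continuity_opp F Hc)
    ltac:(intros s Hs; rewrite <- Ropp_0; now apply derivable_pt_lim_opp, Hd)
    ltac:(intros; lra) t Ht).
  unfold opp_fct in Hdown. lra.
Qed.

Lemma pos_of_never_zero F :
  continuity F -> 0 < F 0 -> (forall t, 0 <= t -> F t <> 0) ->
  forall t, 0 <= t -> 0 < F t.
Proof.
  intros Hc H0 Hnz t Ht. destruct (Rlt_le_dec 0 (F t)) as [|Hle]; [assumption|exfalso].
  destruct (Rle_lt_or_eq_dec _ _ Hle) as [Hneg|Hzero]; [|exact (Hnz t Ht Hzero)].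
  assert (Ht' : 0 < t) by (destruct (Rle_lt_or_eq_dec 0 t Ht) as [|<-]; lra).
  destruct (IVT (opp_fct F) 0 t (continuity_opp F Hc) Ht') as [z [Hz Fz]];
    [unfold opp_fct; lra ..|].
  unfold opp_fct in Fz. apply (Hnz z); lra.
Qed.

(* The equations hold only for t > 0, with right-continuity at 0; freezing the
   functions at their value at 0 for t < 0 makes them continuous on all of R,
   as the mean value and intermediate value theorems require. *)
Definition extend0 (f : R -> R) (t : R) : R := f (Rmax 0 t).

Lemma extend0_eq f t : 0 <= t -> extend0 f t = f t.
Proof. intros Ht. unfold extend0. now rewrite Rmax_right. Qed.

Lemma derivable_pt_lim_extend0 f t l :
  0 < t -> derivable_pt_lim f t l -> derivable_pt_lim (extend0 f) t l.
Proof.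
  intros Ht. apply (derivable_pt_lim_locally_ext f _ t 0 (t + 1)); [lra|].
  intros z Hz. symmetry. apply extend0_eq. lra.
Qed.

Lemma right_cont0_extend0 f : right_cont0 f -> right_cont0 (extend0 f).
Proof.
  intros Hf eps Heps. destruct (Hf eps Heps) as [d [Hd Hnear]].
  exists d. split; [exact Hd|]. intros t Ht. rewrite !extend0_eq by lra. now apply Hnear.
Qed.

Lemma continuity_extend0 f :
  right_cont0 f -> (forall t, 0 < t -> continuity_pt f t) -> continuity (extend0 f).
Proof.
  intros H0 Hpos t0. destruct (Rle_lt_dec t0 0) as [Hle|Hlt].
  - intros eps Heps. destruct (H0 eps Heps) as [d [Hd Hnear]].
    exists d. split; [exact Hd|]. intros x [_ Hx]. simpl in Hx. unfold Rdist in Hx.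
    simpl. unfold Rdist, extend0. rewrite (Rmax_left 0 t0) by lra.
    apply Rabs_def2 in Hx. apply Hnear. split; [apply Rmax_l|].
    unfold Rmax. destruct (Rle_dec 0 x); lra.
  - apply (continuity_pt_locally_ext f _ t0 t0); [lra| |now apply Hpos].
    intros y Hy. unfold Rdist in Hy. apply Rabs_def2 in Hy.
    symmetry. apply extend0_eq. lra.
Qed.

Lemma kern_pos a b : 0 < kern a b.
Proof. apply exp_pos. Qed.

Lemma kern_le_1 a b : kern a b <= 1.
Proof.
  unfold kern. rewrite <- exp_0.
  destruct (Rle_lt_or_eq_dec 0 (Rabs (a - b)) (Rabs_pos _)) as [Hlt|Heq].
  - left. apply exp_increasing. lra.
  - rewrite <- Heq, Ropp_0. lra.
Qed.

Lemma kern_lt_1 a b : a <> b -> kern a b < 1.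
Proof.
  intros Hab. unfold kern. rewrite <- exp_0. apply exp_increasing.
  assert (0 < Rabs (a - b)) by (apply Rabs_pos_lt; lra). lra.
Qed.

Lemma kern_diag a : kern a a = 1.
Proof. unfold kern. now rewrite Rminus_diag, Rabs_R0, Ropp_0, exp_0. Qed.

Lemma Rabs_ge_of_kern_le a b c : 0 < c -> kern a b <= c -> - ln c <= Rabs (a - b).
Proof.
  intros Hc Hk.
  assert (Hln : ln (kern a b) <= ln c) by (apply ln_le; [apply kern_pos|exact Hk]).
  unfold kern in Hln. rewrite ln_exp in Hln. lra.
Qed.

Lemma H1_sum_diff q1 q2 p1 p2 :
  2 * H1 q1 q2 p1 p2 =
  (p1 + p2) ^ 2 * (1 + kern q1 q2) + (p1 - p2) ^ 2 * (1 - kern q1 q2).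
Proof. unfold H1. ring. Qed.

Lemma sgn_0 : sgn 0 = 0.
Proof. unfold sgn. now destruct (Rlt_dec 0 0); [lra|]. Qed.

Lemma derivable_pt_lim_eq f x l l' :
  derivable_pt_lim f x l -> l = l' -> derivable_pt_lim f x l'.
Proof. now intros Hf <-. Qed.

Section TwoPeakonFlow.

Variables Q1 Q2 P1 P2 : R -> R.
Hypothesis solution : peakon2_solution Q1 Q2 P1 P2.
Hypotheses (Q1_cont : continuity Q1) (Q2_cont : continuity Q2)
  (P1_cont : continuity P1) (P2_cont : continuity P2).

Let gap t := Q1 t - Q2 t.
Let K t := kern (Q1 t) (Q2 t).
Let psum t := P1 t + P2 t.
Let pdiff t := P1 t - P2 t.

Let hamilton := proj1 solution.

Lemma continuity_kern_flow : continuity K.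
Proof.
  unfold K, kern.
  apply (continuity_comp (fun t => - Rabs (Q1 t - Q2 t)) exp).
  - apply continuity_opp, (continuity_comp (fun t => Q1 t - Q2 t) Rabs);
      [apply continuity_minus; assumption | exact Rcontinuity_abs].
  - intro x. apply derivable_continuous_pt, derivable_pt_exp.
Qed.

Lemma gap_derive t : 0 < t -> derivable_pt_lim gap t (pdiff t * (1 - K t)).
Proof.
  intros Ht. destruct (hamilton t Ht) as (dQ1 & dQ2 & _).
  eapply derivable_pt_lim_eq; [exact (derivable_pt_lim_minus _ _ _ _ _ dQ1 dQ2)|].
  unfold pdiff, K. ring.
Qed.

Lemma kern_flow_derive t :
  0 < t -> derivable_pt_lim K t (K t * - (sgn (gap t) * (pdiff t * (1 - K t)))).
Proof.
  intros Ht. unfold K at 1, kern.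
  apply (derivable_pt_lim_comp (fun s => - Rabs (gap s)) exp), derivable_pt_lim_exp.
  apply (derivable_pt_lim_opp (fun s => Rabs (gap s))).
  apply derivable_pt_lim_Rabs_comp; [now apply gap_derive|].
  intros Hgap. unfold K. replace (Q2 t) with (Q1 t) by (unfold gap in Hgap; lra).
  rewrite kern_diag. ring.
Qed.

Lemma psum_const t : 0 <= t -> psum t = psum 0.
Proof.
  apply eq_of_derive_zero; [now apply continuity_plus|].
  intros s Hs. destruct (hamilton s Hs) as (_ & _ & dP1 & dP2).
  eapply derivable_pt_lim_eq; [exact (derivable_pt_lim_plus _ _ _ _ _ dP1 dP2)|]. ring.
Qed.

Lemma energy_const t :
  0 <= t -> H1 (Q1 t) (Q2 t) (P1 t) (P2 t) = H1 (Q1 0) (Q2 0) (P1 0) (P2 0).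
Proof.
  pose (E s := P1 s * P1 s + P2 s * P2 s + 2 * (P1 s * P2 s) * K s).
  assert (HE : forall s, H1 (Q1 s) (Q2 s) (P1 s) (P2 s) = E s)
    by (intro; unfold E, K, H1; ring).
  rewrite !HE. revert t. apply eq_of_derive_zero.
  - unfold E. repeat (assumption || apply continuity_kern_flow || apply continuity_plus
                      || apply continuity_mult || (apply continuity_const; now intros ? ?)).
  - intros t Ht. destruct (hamilton t Ht) as (_ & _ & dP1 & dP2).
    pose proof (kern_flow_derive t Ht) as dK.
    eapply derivable_pt_lim_eq.
    + unfold E. repeat (eassumption || apply derivable_pt_lim_plus
                        || apply derivable_pt_lim_mult || apply derivable_pt_lim_const).
    + unfold gap, pdiff, K in *. ring.
Qed.

Hypothesis gap0 : Q1 0 > Q2 0.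
Hypothesis energy_one : H1 (Q1 0) (Q2 0) (P1 0) (P2 0) = 1.

Lemma energy_split t :
  0 <= t -> psum 0 ^ 2 * (1 + K t) + pdiff t ^ 2 * (1 - K t) = 2.
Proof.
  intros Ht. rewrite <- (psum_const t Ht). unfold psum, pdiff, K.
  rewrite <- H1_sum_diff, energy_const, energy_one by exact Ht. ring.
Qed.

Lemma gap_bounded_below_of_large_psum :
  1 < Rabs (psum 0) -> exists delta, 0 < delta /\ forall t, 0 <= t -> delta <= gap t.
Proof.
  intros Hs. set (s := psum 0) in *.
  assert (Hs2 : 1 < s ^ 2) by (rewrite <- pow2_abs; nra).
  set (c := (2 - s ^ 2) / s ^ 2).
  assert (HKc : forall t, 0 <= t -> K t <= c).
  { intros t Ht. pose proof (energy_split t Ht) as Hsplit. fold s in Hsplit.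
    assert (0 <= pdiff t ^ 2 * (1 - K t)).
    { apply Rmult_le_pos; [apply pow2_ge_0|].
      pose proof (kern_le_1 (Q1 t) (Q2 t)). unfold K. lra. }
    unfold c, Rdiv. apply (Rmult_le_reg_r (s ^ 2)); [lra|].
    rewrite Rmult_assoc, Rinv_l, Rmult_1_r by lra. nra. }
  assert (Hc_pos : 0 < c).
  { pose proof (kern_pos (Q1 0) (Q2 0)). pose proof (HKc 0 (Rle_refl 0)). unfold K in *. lra. }
  assert (Hc_lt1 : c < 1).
  { unfold c, Rdiv. apply (Rmult_lt_reg_r (s ^ 2)); [lra|].
    rewrite Rmult_assoc, Rinv_l, Rmult_1_r by lra. lra. }
  assert (Hdelta : 0 < - ln c).
  { pose proof (ln_increasing c 1 Hc_pos Hc_lt1). rewrite ln_1 in *. lra. }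
  assert (Habs : forall t, 0 <= t -> - ln c <= Rabs (gap t)).
  { intros t Ht. now apply Rabs_ge_of_kern_le, HKc. }
  assert (Hpos : forall t, 0 <= t -> 0 < gap t).
  { apply pos_of_never_zero; [now apply continuity_minus| unfold gap; lra|].
    intros t Ht Hzero. specialize (Habs t Ht). rewrite Hzero, Rabs_R0 in Habs. lra. }
  exists (- ln c). split; [exact Hdelta|]. intros t Ht.
  rewrite <- (Rabs_pos_eq (gap t)) by (left; now apply Hpos). now apply Habs.
Qed.

Lemma pdiff_derive t :
  0 < t -> derivable_pt_lim pdiff t (2 * (P1 t * P2 t * sgn (gap t)) * K t).
Proof.
  intros Ht. destruct (hamilton t Ht) as (_ & _ & dP1 & dP2).
  eapply derivable_pt_lim_eq; [exact (derivable_pt_lim_minus _ _ _ _ _ dP1 dP2)|].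
  unfold gap, K. ring.
Qed.

Lemma pdiff_pos_of_small_psum :
  Rabs (psum 0) <= 1 -> 0 < pdiff 0 -> forall t, 0 <= t -> 0 < pdiff t.
Proof.
  intros Hs Hd0. set (s := psum 0) in *.
  assert (Hs2 : s ^ 2 <= 1) by (rewrite <- pow2_abs; pose proof (Rabs_pos s); nra).
  assert (pdiff_cont : continuity pdiff) by now apply continuity_minus.
  destruct (Rle_lt_or_eq_dec _ _ Hs2) as [Hlt|Heq].
  - apply pos_of_never_zero; [exact pdiff_cont|exact Hd0|].
    intros t Ht Hzero. pose proof (energy_split t Ht) as Hsplit. fold s in Hsplit.
    pose proof (kern_le_1 (Q1 t) (Q2 t)). pose proof (pow2_ge_0 s).
    rewrite Hzero in Hsplit. unfold K in Hsplit. nra.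
  - intros t Ht. rewrite (eq_of_derive_zero pdiff pdiff_cont); [exact Hd0| |exact Ht].
    intros u Hu. eapply derivable_pt_lim_eq; [now apply pdiff_derive|].
    destruct (Req_dec (gap u) 0) as [Hgap|Hgap]; [rewrite Hgap, sgn_0; ring|].
    assert (HK : K u < 1) by (apply kern_lt_1; unfold gap in Hgap; lra).
    pose proof (energy_split u (Rlt_le _ _ Hu)) as Hsplit. fold s in Hsplit.
    rewrite Heq in Hsplit.
    assert (Hd2 : pdiff u ^ 2 = 1).
    { apply (Rmult_eq_reg_r (1 - K u)); lra. }
    assert (Hprod : P1 u * P2 u = 0).
    { pose proof (psum_const u (Rlt_le _ _ Hu)) as Hsum. fold s in Hsum.
      unfold psum, pdiff in *. nra. }
    rewrite Hprod. ring.
Qed.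

Lemma gap_nondecreasing :
  (forall t, 0 <= t -> 0 <= pdiff t) -> forall t, 0 <= t -> gap 0 <= gap t.
Proof.
  intros Hd. apply (le_of_derive_nonneg gap (fun t => pdiff t * (1 - K t))).
  - now apply continuity_minus.
  - exact gap_derive.
  - intros t Ht. apply Rmult_le_pos; [now apply Hd|].
    pose proof (kern_le_1 (Q1 t) (Q2 t)). unfold K. lra.
Qed.

Lemma gap_bounded_below :
  Rabs (psum 0) > 1 \/ pdiff 0 > 0 ->
  exists delta, 0 < delta /\ forall t, 0 <= t -> delta <= gap t.
Proof.
  intros Hcase. destruct (Rlt_le_dec 1 (Rabs (psum 0))) as [Hlarge|Hsmall].
  - now apply gap_bounded_below_of_large_psum.
  - destruct Hcase as [Hlarge|Hd0]; [lra|].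
    exists (gap 0). split; [unfold gap; lra|].
    apply gap_nondecreasing. intros t Ht. left. now apply pdiff_pos_of_small_psum.
Qed.

End TwoPeakonFlow.

Lemma continuity_pt_of_derivable_pt_lim f x l :
  derivable_pt_lim f x l -> continuity_pt f x.
Proof. intros Hf. exact (derivable_continuous_pt f x (exist _ l Hf)). Qed.

Lemma peakon2_solution_extend0 q1 q2 p1 p2 :
  peakon2_solution q1 q2 p1 p2 ->
  peakon2_solution (extend0 q1) (extend0 q2) (extend0 p1) (extend0 p2).
Proof.
  intros [Hode (Hq1 & Hq2 & Hp1 & Hp2)].
  split; [|repeat split; now apply right_cont0_extend0].
  intros t Ht. rewrite !extend0_eq by lra.
  destruct (Hode t Ht) as (dq1 & dq2 & dp1 & dp2).
  repeat split; now apply derivable_pt_lim_extend0.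
Qed.

Lemma continuity_extend0_solution q1 q2 p1 p2 :
  peakon2_solution q1 q2 p1 p2 ->
  continuity (extend0 q1) /\ continuity (extend0 q2) /\
  continuity (extend0 p1) /\ continuity (extend0 p2).
Proof.
  intros [Hode (Hq1 & Hq2 & Hp1 & Hp2)].
  repeat split; apply continuity_extend0; try assumption; intros t Ht;
    destruct (Hode t Ht) as (dq1 & dq2 & dp1 & dp2);
    eapply continuity_pt_of_derivable_pt_lim; eassumption.
Qed.

Theorem lemma2 (q1 q2 p1 p2 : R -> R) :
  peakon2_solution q1 q2 p1 p2 ->
  q1 0 > q2 0 ->
  H1 (q1 0) (q2 0) (p1 0) (p2 0) = 1 ->
  (Rabs (p1 0 + p2 0) > 1 \/ p1 0 - p2 0 > 0) ->
  (exists delta, 0 < delta /\ forall t, 0 <= t -> q1 t - q2 t >= delta) /\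
  (forall t, 0 <= t -> q1 t <> q2 t).
Proof.
  intros Hsol Hgap0 Henergy Hcase.
  destruct (continuity_extend0_solution _ _ _ _ Hsol) as (Hq1 & Hq2 & Hp1 & Hp2).
  assert (Hext0 : forall f, extend0 f 0 = f 0) by (intro; apply extend0_eq, Rle_refl).
  destruct (gap_bounded_below (extend0 q1) (extend0 q2) (extend0 p1) (extend0 p2)
              (peakon2_solution_extend0 _ _ _ _ Hsol) Hq1 Hq2 Hp1 Hp2)
    as [delta [Hdelta Hbound]]; rewrite ?Hext0; try assumption.
  assert (Hsep : forall t, 0 <= t -> delta <= q1 t - q2 t).
  { intros t Ht. specialize (Hbound t Ht). now rewrite !extend0_eq in Hbound. }
  split.
  - exists delta. split; [exact Hdelta|]. intros t Ht. apply Rle_ge, Hsep, Ht.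
  - intros t Ht Heq. specialize (Hsep t Ht). rewrite Heq in Hsep. lra.
Qed.
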